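(* Let $(\chi,u)$ be a rooted chirotope with ground set $X\cup\{u\}$, and let $\widetilde\chi$ be the function on ordered triples of distinct elements of $X\cup\{v\}$ ($v$ a new element) defined by $\widetilde\chi(x,y,z)=\chi(x,y,z)$ for $x,y,z\in X$ and $\widetilde\chi(x,y,v)=-\chi(x,y,u)$ for distinct $x,y\in X$ (extended to all orderings by the alternating symmetry). Then $\widetilde\chi$ is a chirotope. Moreover, if $\chi$ is realizable, then $\widetilde\chi$ is realizable as well.
   Context: For a finite set $E$, a sign function on $E$ is a map $\chi$ from ordered triples of distinct elements of $E$ to $\{-1,1\}$ with $\chi(x,y,z)=\chi(y,z,x)=\chi(z,x,y)=-\chi(z,y,x)=-\chi(y,x,z)=-\chi(x,z,y)$. A chirotope is a sign function that moreover satisfies: (interiority) for distinct $t,x,y,z$, if $\chi(t,y,z)=\chi(x,t,z)=\chi(x,y,t)=1$ then $\chi(x,y,z)=1$; (transitivity) for distinct $s,t,x,y,z$, if $\chi(t,s,x)=\chi(t,s,y)=\chi(t,s,z)=\chi(x,y,t)=\chi(y,z,t)=1$ then $\chi(x,z,t)=1$. It is realizable if there are points in $\mathbb R^2$, no three collinear, indexed by $E$, with $\chi(x,y,z)=1$ iff the corresponding points are in counterclockwise order. An element $u$ is extreme if there is $y\ne u$ with $\chi(u,y,z)$ constant over $z\in E\setminus\{u,y\}$; a rooted chirotope is a pair $(\chi,u)$ with $u$ extreme. The rooted pair $(\widetilde\chi,v)$ is called the twist of $(\chi,u)$. *)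

From mathcomp Require Import all_boot.
From Stdlib Require Import ZArith Reals.

Set Implicit Arguments.
Unset Strict Implicit.

Definition distinct3 {E : Type} (x y z : E) : Prop := x <> y /\ y <> z /\ x <> z.

Definition sign_function {E : Type} (chi : E -> E -> E -> Z) : Prop :=
  forall x y z, distinct3 x y z ->
    (chi x y z = 1%Z \/ chi x y z = (-1)%Z) /\
    chi x y z = chi y z x /\ chi x y z = chi z x y /\
    chi x y z = (- chi z y x)%Z /\ chi x y z = (- chi y x z)%Z /\
    chi x y z = (- chi x z y)%Z.

Definition interiority {E : Type} (chi : E -> E -> E -> Z) : Prop :=
  forall t x y z, t <> x -> t <> y -> t <> z -> distinct3 x y z ->
    chi t y z = 1%Z -> chi x t z = 1%Z -> chi x y t = 1%Z -> chi x y z = 1%Z.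

Definition transitivity {E : Type} (chi : E -> E -> E -> Z) : Prop :=
  forall s t x y z,
    s <> t -> s <> x -> s <> y -> s <> z -> t <> x -> t <> y -> t <> z ->
    distinct3 x y z ->
    chi t s x = 1%Z -> chi t s y = 1%Z -> chi t s z = 1%Z ->
    chi x y t = 1%Z -> chi y z t = 1%Z -> chi x z t = 1%Z.

Definition chirotope {E : Type} (chi : E -> E -> E -> Z) : Prop :=
  sign_function chi /\ interiority chi /\ transitivity chi.

Definition orient_det (p q r : R * R) : R :=
  ((fst q - fst p) * (snd r - snd p) - (snd q - snd p) * (fst r - fst p))%R.

Definition realizable {E : Type} (chi : E -> E -> E -> Z) : Prop :=
  exists p : E -> R * R,
    (forall x y, p x = p y -> x = y) /\
    (forall x y z, distinct3 x y z -> orient_det (p x) (p y) (p z) <> 0%R) /\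
    (forall x y z, distinct3 x y z ->
        (chi x y z = 1%Z <-> (orient_det (p x) (p y) (p z) > 0)%R)).

Definition extreme {E : Type} (chi : E -> E -> E -> Z) (u : E) : Prop :=
  exists y, y <> u /\
    forall z z', z <> u -> z <> y -> z' <> u -> z' <> y -> chi u y z = chi u y z'.

Definition rooted_chirotope {E : Type} (chi : E -> E -> E -> Z) (u : E) : Prop :=
  chirotope chi /\ extreme chi u.

(* Ground set X ∪ {u} is modelled as option X with u = None; the twist lives on
   X ∪ {v}, again option X with v = None.  On triples inside X it agrees with
   chi; a triple containing v gets the opposite sign of the same triple with u.
   (For the ordering (x,y,v) this is the defining rule; the other orderings are
   its alternating extension, which amounts to the same rule, because chi is
   alternating.) *)
Definition twist {X : Type} (chi : option X -> option X -> option X -> Z)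
    (a b c : option X) : Z :=
  match a, b, c with
  | Some _, Some _, Some _ => chi a b c
  | _, _, _ => (- chi a b c)%Z
  end.

(* Around an extreme element u the relation "a before b iff chi(u,a,b) = 1" is a
   strict linear order: transitivity, or its dual, applied at u and at the witness of
   extremeness excludes cyclic triples.  Twisting negates exactly the triples through
   u, so every interiority instance of the twist that involves v is an instance of
   transitivity of this order, and every transitivity instance that involves v is an
   instance of the dual transitivity axiom of chi (Knuth's axiom 5'), which holds in
   any chirotope.  For realizability, an extreme point can be strictly separated from
   the others by a line; the projective transformation sending this line to infinity
   moves u to the other side, which reverses exactly the orientations of the triples
   through u. *)

From mathcomp Require Import all_boot.
From Stdlib Require Import ZArith Reals Lia Lra Psatz Classical.

Definition dual_transitivity {E : Type} (chi : E -> E -> E -> Z) : Prop :=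
  forall s t x y z,
    s <> t -> s <> x -> s <> y -> s <> z -> t <> x -> t <> y -> t <> z ->
    distinct3 x y z ->
    chi s t x = 1%Z -> chi s t y = 1%Z -> chi s t z = 1%Z ->
    chi x y t = 1%Z -> chi y z t = 1%Z -> chi x z t = 1%Z.

Definition alternating_at {E : Type} (chi : E -> E -> E -> Z) (x y z : E) : Prop :=
  chi x y z = chi y z x /\ chi x y z = chi z x y /\
  chi x y z = (- chi z y x)%Z /\ chi x y z = (- chi y x z)%Z /\
  chi x y z = (- chi x z y)%Z.

Ltac distinct := repeat split; congruence.

Ltac use H :=
  let R := fresh "R" in
  have R := H;
  repeat match type of R with
  | ?a <> ?b -> _ => specialize (R ltac:(congruence))
  | distinct3 _ _ _ -> _ => specialize (R ltac:(distinct))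
  end.

Ltac add_alternating Hsf chi a b c :=
  lazymatch goal with
  | _ : alternating_at chi a b c |- _ => fail
  | _ => have ? : alternating_at chi a b c := (Hsf a b c ltac:(distinct)).2
  end.

(* Decides a goal about signs by [lia], after recording the alternation identities of
   every triple mentioned and the two possible signs of a triple in the goal. *)
Ltac chi_lia :=
  match goal with Hsf : sign_function ?chi |- _ =>
    try lazymatch goal with
    | |- context [chi ?a ?b ?c] => have ? := (Hsf a b c ltac:(distinct)).1
    end;
    repeat match goal with
    | H : context [chi ?a ?b ?c] |- _ => add_alternating Hsf chi a b c
    | |- context [chi ?a ?b ?c] => add_alternating Hsf chi a b c
    end
  end;
  unfold alternating_at in *; lia.

Section Chirotope.

Context {E : Type} {chi : E -> E -> E -> Z}.
Hypotheses (Hsf : sign_function chi) (Hint : interiority chi) (Htr : transitivity chi).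

Lemma chirotope_dual_transitivity : dual_transitivity chi.
Proof.
move=> s t x y z st sx sy sz tx ty tz [xy [yz xz]] stx sty stz xyt yzt.
have [//|xzt] := (Hsf x z t ltac:(distinct)).1.
have xyz : chi x y z = 1%Z by use (Hint t x y z); chi_lia.
have [sxy|sxy] := (Hsf s x y ltac:(distinct)).1.
- have sxz : chi s x z = (-1)%Z by use (Htr y x s t z); chi_lia.
  have syz : chi s y z = (-1)%Z by use (Htr t s x y z); chi_lia.
  by use (Htr x z s t y); chi_lia.
- have syz : chi s y z = (-1)%Z by use (Htr z y s t x); chi_lia.
  have sxz : chi s x z = (-1)%Z by use (Hint s x z y); chi_lia.
  by use (Htr x z s t y); chi_lia.
Qed.

End Chirotope.

Section Extreme.

Context {E : Type} {chi : E -> E -> E -> Z} {u : E}.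
Hypotheses (Hsf : sign_function chi) (Htr : transitivity chi) (Hdtr : dual_transitivity chi).
Hypothesis Hext : extreme chi u.

Lemma extreme_sign : exists w (e : Z), [/\ w <> u, e = 1%Z \/ e = (-1)%Z &
  forall z, z <> u -> z <> w -> chi u w z = e].
Proof.
have [w [wu Hw]] := Hext.
case: (classic (exists z, z <> u /\ z <> w)) => [[z [zu zw]]|none].
  exists w, (chi u w z); split=> // [|z' z'u z'w]; last by use (Hw z' z).
  exact: (Hsf u w z ltac:(distinct)).1.
exists w, 1%Z; split; [done | by left | move=> z zu zw].
by case: none; exists z.
Qed.

Lemma extreme_order_trans a b c : a <> u -> b <> u -> c <> u -> distinct3 a b c ->
  chi u a b = 1%Z -> chi u b c = 1%Z -> chi u a c = 1%Z.
Proof.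
move=> au bu cu [ab [bc ac]] uab ubc.
have [w [e [wu [e1|e1] Hw]]] := extreme_sign.
all: case: (classic (w = a)) => [?|wa]; first by subst w; use (Hw b); use (Hw c); chi_lia.
all: case: (classic (w = b)) => [?|wb]; first by subst w; use (Hw a); use (Hw c); chi_lia.
all: case: (classic (w = c)) => [?|wc]; first by subst w; use (Hw a); use (Hw b); chi_lia.
all: use (Hw a); use (Hw b); use (Hw c).
- by use (Htr w u a b c); chi_lia.
- by use (Hdtr w u a b c); chi_lia.
Qed.

End Extreme.

Section Twist.

Variables (X : Type) (chi : option X -> option X -> option X -> Z).
Hypotheses (Hsf : sign_function chi) (Hint : interiority chi) (Htr : transitivity chi).
Hypothesis Hext : extreme chi None.

Let Hdtr := chirotope_dual_transitivity Hsf Hint Htr.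
Let lt_trans := extreme_order_trans Hsf Htr Hdtr Hext.

Lemma twist_sign_function : sign_function (twist chi).
Proof.
move=> [x|] [y|] [z|] D; have [pm alt] := Hsf _ _ _ D; case: D => [xy [yz xz]] /=;
  by [congruence | lia].
Qed.

Lemma twist_interiority : interiority (twist chi).
Proof.
move=> [t|] [x|] [y|] [z|] tx ty tz [xy [yz xz]] /=; try congruence; move=> h1 h2 h3.
- exact: Hint tx ty tz (conj xy (conj yz xz)) h1 h2 h3.
- by use (lt_trans (Some t) (Some x) (Some y)); chi_lia.
- by use (lt_trans (Some t) (Some z) (Some x)); chi_lia.
- by use (lt_trans (Some t) (Some y) (Some z)); chi_lia.
- by use (lt_trans (Some x) (Some z) (Some y)); chi_lia.
Qed.

Lemma twist_transitivity : transitivity (twist chi).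
Proof.
move=> [s|] [t|] [x|] [y|] [z|] st sx sy sz tx ty tz [xy [yz xz]] /=; try congruence;
  move=> h1 h2 h3 h4 h5.
- exact: Htr st sx sy sz tx ty tz (conj xy (conj yz xz)) h1 h2 h3 h4 h5.
- by use (Hdtr (Some y) (Some t) None (Some s) (Some x)); chi_lia.
- by use (Hdtr (Some x) (Some t) None (Some s) (Some z)); chi_lia.
- by use (Hdtr (Some z) (Some t) None (Some s) (Some y)); chi_lia.
- by use (Hdtr (Some s) None (Some x) (Some z) (Some y)); chi_lia.
- by use (Hdtr None (Some t) (Some x) (Some y) (Some z)); chi_lia.
Qed.

End Twist.

Local Open Scope R_scope.

Lemma small_perturbation_pos {T : eqType} (s : seq T) (a b : T -> R) :
  {in s, forall i, 0 < a i} ->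
  exists2 d, 0 < d & forall e, 0 < e <= d -> {in s, forall i, 0 < a i + e * b i}.
Proof.
elim: s => [|i s IH] a_pos; first by exists 1; [lra|].
have [d d_pos Hd] := IH (fun j js => a_pos j ltac:(by rewrite inE js orbT)).
have ai_pos := a_pos i (mem_head i s).
have k_pos : 0 < Rabs (b i) + 1 by have := Rabs_pos (b i); lra.
pose di := a i / (Rabs (b i) + 1).
exists (Rmin d di); first by apply: Rmin_glb_lt => //; apply: Rdiv_lt_0_compat.
move=> e [e_pos e_le] j; rewrite inE => /predU1P [->|js].
- have : e * (Rabs (b i) + 1) <= a i.
    have -> : a i = di * (Rabs (b i) + 1) by rewrite /di; field; lra.
    by apply: Rmult_le_compat_r; [lra | apply: Rle_trans e_le (Rmin_r _ _)].
  have := Rle_abs (- b i); rewrite Rabs_Ropp; nra.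
- by apply: Hd js; split => //; apply: Rle_trans e_le (Rmin_l _ _).
Qed.

Definition realization {E : Type} (chi : E -> E -> E -> Z) (p : E -> R * R) : Prop :=
  (forall x y, p x = p y -> x = y) /\
  (forall x y z, distinct3 x y z -> orient_det (p x) (p y) (p z) <> 0) /\
  (forall x y z, distinct3 x y z -> (chi x y z = 1%Z <-> orient_det (p x) (p y) (p z) > 0)).

Definition affine (c : R * R) (l1 l2 g0 : R) (P : R * R) : R :=
  l1 * (fst P - fst c) + l2 * (snd P - snd c) + g0.

(* The projective transformation sending the line [affine c l1 l2 g0 = 0] to infinity,
   composed with the reflection swapping the coordinates, so that orientations are
   scaled by [- g0 = - affine c l1 l2 g0 c] (see [orient_det_proj_map]). *)
Definition proj_map (c : R * R) (l1 l2 g0 : R) (P : R * R) : R * R :=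
  ((snd P - snd c) / affine c l1 l2 g0 P, (fst P - fst c) / affine c l1 l2 g0 P).

Section ProjectiveMap.

Context {c : R * R} {l1 l2 g0 : R}.
Let g := affine c l1 l2 g0.
Let f := proj_map c l1 l2 g0.

Lemma orient_det_proj_map {P Q S} : g P <> 0 -> g Q <> 0 -> g S <> 0 ->
  orient_det (f P) (f Q) (f S) * (g P * g Q * g S) = - g0 * orient_det P Q S.
Proof. by rewrite /f /g /proj_map /orient_det /affine /= => *; field. Qed.

Lemma proj_map_inj {P Q} : g0 <> 0 -> g P <> 0 -> g Q <> 0 -> f P = f Q -> P = Q.
Proof.
move=> g0_nz gP gQ; rewrite /f /proj_map -/g; case=> e2 e1.
have {}e1 : (fst P - fst c) * g Q = (fst Q - fst c) * g P.
  by field_simplify_eq in e1; [split | lra].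
have {}e2 : (snd P - snd c) * g Q = (snd Q - snd c) * g P.
  by field_simplify_eq in e2; [split | lra].
have gPQ : g P = g Q.
  have key : g0 * (g P - g Q) =
      l1 * ((fst P - fst c) * g Q - (fst Q - fst c) * g P) +
      l2 * ((snd P - snd c) * g Q - (snd Q - snd c) * g P).
    by rewrite /g /affine; ring.
  have : g0 * (g P - g Q) = 0 by rewrite key e1 e2; ring.
  by case/Rmult_integral => //; lra.
rewrite gPQ in e1 e2.
have h1 : fst P = fst Q by apply: (Rmult_eq_reg_r (g Q)) => //; lra.
have h2 : snd P = snd Q by apply: (Rmult_eq_reg_r (g Q)) => //; lra.
by rewrite (surjective_pairing P) (surjective_pairing Q) h1 h2.
Qed.

End ProjectiveMap.

Lemma mul_pos_transfer {q G k O : R} : 0 < k -> G <> 0 -> q * G = k * O ->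
  (0 < q <-> 0 < G * O).
Proof.
move=> k_pos G_nz qG; have G2 : 0 < G * G by nra.
split=> h; nra.
Qed.

Section TwistRealization.

Variables (X : finType) (chi : option X -> option X -> option X -> Z).
Hypotheses (Hsf : sign_function chi) (Hext : extreme chi None).

Lemma twist_sign_mul (G : option X -> R) (O : R) a b c : distinct3 a b c ->
  (forall x, 0 < G (Some x)) -> G None < 0 -> O <> 0 -> (chi a b c = 1%Z <-> 0 < O) ->
  (twist chi a b c = 1%Z <-> 0 < G a * G b * G c * O).
Proof.
move=> D G_pos G_neg O_nz chiO; have [chi_pm _] := Hsf a b c D.
have chi_neg : chi a b c = (-1)%Z <-> O < 0.
  split=> [h|h]; last by case: chi_pm => // /chiO; lra.
  have : ~ 0 < O by move/chiO; rewrite h.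
  lra.
have [[Gp tw]|[Gp tw]] : (0 < G a * G b * G c /\ twist chi a b c = chi a b c) \/
                        (G a * G b * G c < 0 /\ twist chi a b c = (- chi a b c)%Z).
  case: a b c D {chi_pm chiO chi_neg} => [a|] [b|] [c|] [ab [bc ac]] //=; try congruence.
  - by left; split=> //; repeat apply: Rmult_lt_0_compat; apply: G_pos.
  1-3: right; split=> //.
  - by have := Rmult_lt_0_compat _ _ (G_pos a) (G_pos b); nra.
  - by have := Rmult_lt_0_compat _ _ (G_pos a) (G_pos c); nra.
  - by have := Rmult_lt_0_compat _ _ (G_pos b) (G_pos c); nra.
- rewrite tw; split=> [/chiO|h]; first by nra.
  by apply/chiO; nra.
- rewrite tw; split=> [h|h].
  + have : O < 0 by apply/chi_neg; lia.
    nra.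
  + have : O < 0 by nra.
    by move/chi_neg => ->.
Qed.

Lemma extreme_separation {p : option X -> R * R} : realization chi p ->
  exists l1 l2 g0, g0 < 0 /\ forall x, 0 < affine (p None) l1 l2 g0 (p (Some x)).
Proof.
case=> p_inj [p_nz p_or].
have [w [e [wu e_pm He]]] := extreme_sign Hsf Hext.
pose d1 := fst (p w) - fst (p None); pose d2 := snd (p w) - snd (p None); pose n := d1 * d1 + d2 * d2.
have n_pos : 0 < n.
  have [d1_0|d1_nz] := Req_dec d1 0; last by rewrite /n; nra.
  have [d2_0|d2_nz] := Req_dec d2 0; last by rewrite /n; nra.
  case: wu; apply: p_inj; rewrite [p w]surjective_pairing [p None]surjective_pairing.
  by rewrite /d1 /d2 in d1_0 d2_0; f_equal; lra.
pose sgn := IZR e.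
pose lin P := sgn * orient_det (p None) (p w) P.
have lin_pos x : Some x <> w -> 0 < lin (p (Some x)).
  move=> xw; have D : distinct3 None w (Some x) by distinct.
  have nz := p_nz _ _ _ D; have [or1 or2] := p_or _ _ _ D.
  rewrite /lin /sgn; case: e_pm (He (Some x) ltac:(congruence) xw) => -> chi_e.
  - by have := or1 chi_e; lra.
  - have : ~ orient_det (p None) (p w) (p (Some x)) > 0 by move/or2; rewrite chi_e.
    lra.
(* [lin] vanishes on the line through [p None] and [p w] and is positive at all other
   points; adding a small multiple of [lev], negative at [p None] and positive at
   [p w], separates [p None] from every other point. *)
pose lev P := d1 * (fst P - fst (p None)) + d2 * (snd P - snd (p None)) - n / 2.
have [d d_pos Hd] := small_perturbation_pos (enum [pred x | Some x != w])
  (fun x => lin (p (Some x))) (fun x => lev (p (Some x)))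
  (fun x xw => lin_pos x ltac:(by move: xw; rewrite mem_enum inE => /eqP)).
exists (- sgn * d2 + d * d1), (sgn * d1 + d * d2), (- d * n / 2).
split; first by nra.
move=> x.
have -> : affine (p None) (- sgn * d2 + d * d1) (sgn * d1 + d * d2) (- d * n / 2) (p (Some x))
    = lin (p (Some x)) + d * lev (p (Some x)).
  by rewrite /affine /lin /lev /orient_det /n /d1 /d2; field.
case: (classic (Some x = w)) => [xw|xw].
  rewrite xw /lin /lev /orient_det -/d1 -/d2 -/n; nra.
by apply: (Hd d) => //; [lra | rewrite mem_enum inE; apply/eqP].
Qed.

Lemma twist_realizable : realizable chi -> realizable (twist chi).
Proof.
case=> p Hp; have [p_inj [p_nz p_or]] := Hp.
have [l1 [l2 [g0 [g0_neg g_pos]]]] := extreme_separation Hp.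
pose G a := affine (p None) l1 l2 g0 (p a).
have G_none : G None = g0 by rewrite /G /affine; ring.
have G_pos x : 0 < G (Some x) := g_pos x.
have G_nz a : G a <> 0 by case: a => [x|]; [have := G_pos x | rewrite G_none]; lra.
have proj_det a b c := orient_det_proj_map (G_nz a) (G_nz b) (G_nz c).
exists (fun a => proj_map (p None) l1 l2 g0 (p a)); split; [|split].
- move=> a b eq_ab; apply: p_inj.
  by apply: (proj_map_inj _ _ _ eq_ab) => //; [lra | apply: G_nz | apply: G_nz].
- move=> a b c D det0; apply: (p_nz _ _ _ D).
  have := proj_det a b c; rewrite det0 Rmult_0_l => /esym/Rmult_integral[]; lra.
- move=> a b c D.
  have Gp_nz : G a * G b * G c <> 0.
    by do 2?apply: Rmult_integral_contrapositive_currified.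
  apply: (iff_trans (@twist_sign_mul G _ a b c D G_pos _ (p_nz _ _ _ D) (p_or _ _ _ D))).
    by rewrite G_none.
  by apply: iff_sym; apply: (mul_pos_transfer _ Gp_nz (proj_det a b c)); lra.
Qed.

End TwistRealization.

Theorem proposition2p8 (X : finType) (chi : option X -> option X -> option X -> Z) :
  rooted_chirotope chi None ->
  chirotope (twist chi) /\ (realizable chi -> realizable (twist chi)).
Proof.
move=> [[Hsf [Hint Htr]] Hext]; split; last exact: twist_realizable.
split; first exact: twist_sign_function.
by split; [exact: twist_interiority | exact: twist_transitivity].
Qed.
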